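(* Let $d\geq1$ and fix any $\alpha\in\mathbb{Z}^d$. Then $\big\|d+\sum_{j=1}^d z_j-\varepsilon z^\alpha\big\|_\infty<\big\|d+\sum_{j=1}^d z_j\big\|_\infty$ for every sufficiently small $\varepsilon>0$, where $\|\cdot\|_\infty$ is the supremum norm on $\mathbb{T}^d$.
   Context: $\mathbb{T}^d$ is the $d$-dimensional torus with coordinates $z=(z_1,\dots,z_d)$, and $z^\alpha=z_1^{\alpha_1}\cdots z_d^{\alpha_d}$. *)

From HB Require Import structures.
From mathcomp Require Import all_boot all_order all_algebra.
From mathcomp Require Import all_classical all_reals.
From mathcomp Require Import complex.
Set Implicit Arguments. Unset Strict Implicit. Unset Printing Implicit Defensive.
Import Order.TTheory GRing.Theory Num.Theory.
Local Open Scope ring_scope.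
Local Open Scope classical_set_scope.

Definition torus (R : realType) (d : nat) : set ('I_d -> R[i]) :=
  [set z | forall j, Normc.normc (z j) = 1].

Definition zmono (R : realType) (d : nat) (alpha : 'I_d -> int)
  (z : 'I_d -> R[i]) : R[i] := \prod_(j < d) (z j) ^ (alpha j).

Definition supnorm (R : realType) (d : nat) (F : ('I_d -> R[i]) -> R[i]) : R :=
  sup [set Normc.normc (F z) | z in @torus R d].

Definition pd (R : realType) (d : nat) (z : 'I_d -> R[i]) : R[i] :=
  d%:R + \sum_(j < d) z j.

From HB Require Import structures.
From mathcomp Require Import all_boot all_order all_algebra.
From mathcomp Require Import all_classical all_reals.
From mathcomp Require Import complex.
From mathcomp Require Import ring lra.
Set Implicit Arguments. Unset Strict Implicit. Unset Printing Implicit Defensive.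
Import Order.TTheory GRing.Theory Num.Theory Normc.
Local Open Scope ring_scope.

(* On T^d one has |1 + z_j| <= 2 - |z_j - 1|^2 / 4, so |d + sum_j z_j| <= 2d,
   with a loss quadratic in the distance from z to (1, ..., 1), where the
   supremum 2d is attained.  Away from (1, ..., 1) this quadratic loss absorbs
   the perturbation eps z^alpha once eps is small; near (1, ..., 1) the monomial
   z^alpha is close to 1, so subtracting eps z^alpha lowers the real part d - eps
   of the constant term by more than the error eps |z^alpha - 1| it creates. *)

Section UnitComplex.
Variable R : rcfType.
Implicit Types (z w : R[i]) (k : R).

Lemma normc_real k : normc k%:C%C = `|k|.
Proof. by rewrite /normc /= expr0n addr0 sqrtr_sqr. Qed.

Lemma normc_ge0 z : 0 <= normc z.
Proof. by case: z => a b; exact: sqrtr_ge0. Qed.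

Lemma normcX z n : normc (z ^+ n) = normc z ^+ n.
Proof.
elim: n => [|n IHn]; first by rewrite !expr0 normc1.
by rewrite !exprS normcM IHn.
Qed.

Lemma normc_sum (I : Type) (r : seq I) (P : pred I) (F : I -> R[i]) :
  normc (\sum_(i <- r | P i) F i) <= \sum_(i <- r | P i) normc (F i).
Proof.
apply: (big_rec2 (fun s t => normc s <= t)); first by rewrite normc0.
by move=> i s t _ le_st; apply: le_trans (le_normcD _ _) _; rewrite lerD2l.
Qed.

Lemma normc_exprz_unit z (k : int) : normc z = 1 -> normc (z ^ k) = 1.
Proof.
by move=> z1; case: k => n; rewrite /= ?normcV normcX z1 expr1n ?invr1.
Qed.

Lemma normc_unit_exprB1 z n :
  normc z = 1 -> normc (z ^+ n - 1) <= n%:R * normc (z - 1).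
Proof.
move=> z1; elim: n => [|n IHn]; first by rewrite expr0 subrr normc0 mul0r.
have -> : z ^+ n.+1 - 1 = z * (z ^+ n - 1) + (z - 1) by rewrite exprS; ring.
apply: le_trans (le_normcD _ _) _.
by rewrite normcM z1 mul1r mulrSr mulrDl mul1r lerD2r.
Qed.

Lemma normc_unit_exprzB1 z (k : int) :
  normc z = 1 -> normc (z ^ k - 1) <= (`|k|%N)%:R * normc (z - 1).
Proof.
move=> z1; case: k => n; first exact: normc_unit_exprB1.
have zn1 : normc (z ^+ n.+1) = 1 by rewrite normcX z1 expr1n.
have zn_neq0 : z ^+ n.+1 != 0.
  by apply: contra_eq_neq zn1 => ->; rewrite normc0 eq_sym oner_neq0.
have -> : z ^ Negz n - 1 = (1 - z ^+ n.+1) * (z ^+ n.+1)^-1.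
  by rewrite mulrBl mul1r mulfV.
rewrite normcM normcV zn1 invr1 mulr1 -normcN opprB.
exact: normc_unit_exprB1.
Qed.

Lemma normc_unit_prod (I : finType) (F : I -> R[i]) :
  (forall i, normc (F i) = 1) -> normc (\prod_i F i) = 1.
Proof.
move=> F1; apply: (big_rec (fun p => normc p = 1)); first exact: normc1.
by move=> i p _ p1; rewrite normcM F1 p1 mulr1.
Qed.

Lemma normc_unit_prodB1 (I : finType) (F : I -> R[i]) :
  (forall i, normc (F i) = 1) ->
  normc (\prod_i F i - 1) <= \sum_i normc (F i - 1).
Proof.
move=> F1; apply: (big_rec2 (fun p s => normc (p - 1) <= s)).
  by rewrite subrr normc0.
move=> i p s _ le_ps.
have -> : F i * p - 1 = F i * (p - 1) + (F i - 1) by ring.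
apply: le_trans (le_normcD _ _) _.
by rewrite normcM F1 mul1r addrC lerD2l.
Qed.

(* |1 + z|^2 = 4 - |z - 1|^2 on the unit circle, and sqrt (4 - t) <= 2 - t/4
   for 0 <= t <= 4. *)
Lemma normc_unit_1D z : normc z = 1 -> normc (1 + z) <= 2 - normc (z - 1) ^+ 2 / 4.
Proof.
case: z => a b; rewrite /normc /= => ab1.
have {}ab1 : a ^+ 2 + b ^+ 2 = 1.
  by rewrite -(sqr_sqrtr (addr_ge0 (sqr_ge0 a) (sqr_ge0 b))) ab1 expr1n.
have -> : (1 + a) ^+ 2 + (0 + b) ^+ 2 = 2 + 2 * a by rewrite add0r; nra.
rewrite sqr_sqrtr ?addr_ge0 ?sqr_ge0 // subr0.
have -> : (a - 1) ^+ 2 + b ^+ 2 = 2 - 2 * a by nra.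
have a_ge : -1 <= a by nra.
have rhs_ge0 : 0 <= 2 - (2 - 2 * a) / 4 by lra.
rewrite -(ger0_norm rhs_ge0) -sqrtr_sqr ler_sqrt ?sqr_ge0 //; nra.
Qed.

End UnitComplex.

Section Torus.
Variables (R : realType) (d : nat).
Implicit Types (z : 'I_d -> R[i]) (F : ('I_d -> R[i]) -> R[i]) (M : R).

Lemma torus1 : @torus R d (fun=> 1).
Proof. by move=> j; exact: normc1. Qed.

Lemma supnorm_le F M :
  (forall z, torus z -> normc (F z) <= M) -> supnorm F <= M.
Proof.
move=> FM; apply: ge_sup; last by move=> _ [z zT <-]; exact: FM.
by exists (normc (F (fun=> 1))), (fun=> 1); first exact: torus1.
Qed.

Lemma le_supnorm F M z :
  (forall z, torus z -> normc (F z) <= M) -> torus z -> normc (F z) <= supnorm F.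
Proof.
move=> FM zT; apply: ub_le_sup; last by exists z.
by exists M => _ [y yT <-]; exact: FM.
Qed.

Lemma normc_zmono (alpha : 'I_d -> int) z : torus z -> normc (zmono alpha z) = 1.
Proof. by move=> zT; apply: normc_unit_prod => j; exact: normc_exprz_unit. Qed.

Lemma normc_zmonoB1 (alpha : 'I_d -> int) z : torus z ->
  normc (zmono alpha z - 1) <= \sum_j (`|alpha j|%N)%:R * normc (z j - 1).
Proof.
move=> zT; apply: le_trans (normc_unit_prodB1 _) _.
  by move=> j; exact: normc_exprz_unit.
by apply: ler_sum => j _; exact: normc_unit_exprzB1.
Qed.

Lemma normc_pd_le z : torus z ->
  normc (pd z) <= d%:R *+ 2 - (\sum_j normc (z j - 1) ^+ 2) / 4.
Proof.
move=> zT; have -> : pd z = \sum_j (1 + z j).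
  by rewrite /pd big_split /= sumr_const card_ord.
apply: le_trans (normc_sum _ _ _) _.
apply: le_trans (ler_sum _ (fun j _ => normc_unit_1D (zT j))) _.
by rewrite sumrB sumr_const card_ord -mulr_suml mulrnAC.
Qed.

Lemma supnorm_pd : supnorm (@pd R d) = d%:R *+ 2.
Proof.
have pd_le z : torus z -> normc (pd z) <= d%:R *+ 2.
  move=> zT; apply: le_trans (normc_pd_le zT) _; rewrite lerBlDr lerDl.
  by apply: divr_ge0 => //; apply: sumr_ge0 => j _; exact: sqr_ge0.
apply/le_anti/andP; split; first exact: supnorm_le.
have pd1 : @pd R d (fun=> 1) = (d%:R *+ 2)%:C%C.
  by rewrite /pd sumr_const card_ord rmorphMn rmorph_nat mulr2n.
rewrite -[X in X <= _]ger0_norm ?mulrn_wge0 // -normc_real -pd1.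
exact: le_supnorm pd_le torus1.
Qed.

Lemma normc_pd_subZ_le z (eps : R) (w : R[i]) : torus z -> 0 <= eps <= d%:R ->
  normc (pd z - eps%:C%C * w) <= d%:R *+ 2 - eps + eps * normc (w - 1).
Proof.
move=> zT /andP[eps_ge0 eps_le_d].
have -> : pd z - eps%:C%C * w = (d%:R - eps)%:C%C + \sum_j z j - eps%:C%C * (w - 1).
  by rewrite /pd rmorphB rmorph_nat /=; ring.
apply: le_trans (le_normcD _ _) _; rewrite normcN normcM normc_real ger0_norm //.
rewrite lerD2r mulr2n addrAC; apply: le_trans (le_normcD _ _) (lerD _ _).
  by rewrite normc_real ger0_norm ?subr_ge0.
apply: le_trans (normc_sum _ _ _) _.
by rewrite (eq_bigr (fun=> 1)) ?sumr_const ?card_ord.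
Qed.

Lemma normc_pd_sub_zmono_le (alpha : 'I_d -> int) (del eps : R) z :
  (0 < d)%N -> torus z -> 0 < eps <= 1 -> 0 <= del ->
  (\sum_j (`|alpha j|%N)%:R) * del <= 1 / 4 -> 8 * eps <= del ^+ 2 ->
  normc (pd z - eps%:C%C * zmono alpha z) <= d%:R *+ 2 - eps / 2.
Proof.
move=> d_gt0 zT /andP[eps_gt0 eps_le1] del_ge0 Adel eps_del.
have [far|near] := leP (del ^+ 2) (\sum_j normc (z j - 1) ^+ 2).
  apply: le_trans (le_normcD _ _) _.
  rewrite normcN normcM normc_real gtr0_norm // normc_zmono // mulr1.
  have := normc_pd_le zT; lra.
have z_near j : normc (z j - 1) <= del.
  rewrite -(ler_pXn2r (isT : (0 < 2)%N)) ?nnegrE ?normc_ge0 //; apply/ltW.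
  apply: le_lt_trans near; rewrite (bigD1 j) //= lerDl.
  by apply: sumr_ge0 => i _; exact: sqr_ge0.
have mono_near : normc (zmono alpha z - 1) <= 1 / 4.
  apply: le_trans (normc_zmonoB1 alpha zT) (le_trans _ Adel).
  by rewrite mulr_suml; apply: ler_sum => j _; exact: ler_wpM2l.
have d_ge1 : 1 <= d%:R :> R by rewrite ler1n.
apply: le_trans (normc_pd_subZ_le _ zT _) _; first by apply/andP; split; lra.
have := ler_wpM2l (ltW eps_gt0) mono_near; lra.
Qed.

End Torus.

Theorem lemma2p3 (R : realType) (d : nat) (hd : (1 <= d)%N) (alpha : 'I_d -> int) :
  exists2 e0 : R, 0 < e0 &
    forall eps : R, 0 < eps -> eps < e0 ->
      supnorm (fun z => pd z - (eps%:C)%C * zmono alpha z) < supnorm (@pd R d).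
Proof.
pose A : R := \sum_j (`|alpha j|%N)%:R.
have A_ge0 : 0 <= A by apply: sumr_ge0 => j _; exact: ler0n.
pose del := (4 * (A + 1))^-1.
have del_gt0 : 0 < del by rewrite invr_gt0; lra.
have Adel : A * del <= 1 / 4 by rewrite ler_pdivrMr; lra.
exists (Num.min (del ^+ 2 / 8) 1).
  by rewrite lt_min divr_gt0 ?exprn_gt0 ?ltr01.
move=> eps eps_gt0; rewrite lt_min => /andP[eps_del eps_lt1].
rewrite supnorm_pd; apply: (@le_lt_trans _ _ (d%:R *+ 2 - eps / 2)); last lra.
apply: supnorm_le => z zT; apply: (normc_pd_sub_zmono_le (del := del)) => //.
- by rewrite eps_gt0 ltW.
- exact: ltW.
- lra.
Qed.
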